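(* Let $\beta\in\{1,2\}$ and let $r\geq\beta$ be an integer. Let $x\in[0,1]^N$ satisfy $\|(D^\beta)^Tx\|_0\leq s$, and let $q=Q^{\Sigma\Delta,r}_{\mathcal{A}_\delta}(x)$ be its $r$-th order $\Sigma\Delta$ quantization, whose state vector $u$ satisfies $x-q=D^ru$ and $\|u\|_\infty\leq\delta/2$. Let $\hat x$ be a solution to $$\min_{z\in\mathbb{R}^N}\|(D^\beta)^Tz\|_1\quad\text{subject to}\quad \|D^{-r}(z-q)\|_\infty\leq\delta/2.$$ Then $\|\hat x-x\|_2\leq C\sqrt{s}\,\delta$, where $C$ is a constant independent of $x$.
   Context: $D$ is the $N\times N$ matrix with $1$ on the diagonal, $-1$ on the subdiagonal, $0$ elsewhere; $D^r$ is its $r$-th power. $\|v\|_0$ is the number of nonzero entries. The alphabet is $\mathcal{A}_\delta=\{c+J\delta: J\in\mathbb{Z},\ J_1\leq J\leq J_2\}$ with step size $\delta>0$, and $Q_{\mathcal{A}}(z)$ is an element of $\mathcal{A}$ nearest to $z$. The $r$-th order $\Sigma\Delta$ quantization of $y\in\mathbb{R}^N$: with $u_i=0$ for $i\leq 0$, for $i=1,\dots,N$ set $q_i=Q_{\mathcal{A}}\big(\sum_{j=1}^r(-1)^{j-1}\binom{r}{j}u_{i-j}+y_i\big)$ and define $u_i$ by $(D^ru)_i=y_i-q_i$. The alphabet is assumed to have enough levels that the scheme is stable with $\|u\|_\infty\leq\delta/2$. *)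

From mathcomp Require Import all_boot all_order all_algebra.
From mathcomp Require Import reals.
Set Implicit Arguments. Unset Strict Implicit. Unset Printing Implicit Defensive.
Import Order.TTheory GRing.Theory Num.Theory.
Local Open Scope ring_scope.

Section Defs.
Variable R : realType.

Definition Dmx (N : nat) : 'M[R]_N :=
  \matrix_(i < N, j < N)
    (if i == j then 1 else if (i : nat) == j.+1 then -1 else 0).

Definition l0 N (v : 'cV[R]_N) : nat := #|[set i | v i 0 != 0]|.
Definition l1 N (v : 'cV[R]_N) : R := \sum_(i < N) `|v i 0|.
Definition l2 N (v : 'cV[R]_N) : R := Num.sqrt (\sum_(i < N) (v i 0) ^+ 2).
Definition linf_le N (v : 'cV[R]_N) (t : R) : Prop := forall i, `|v i 0| <= t.

Definition alphabet (c delta : R) (J1 J2 : int) (a : R) : Prop :=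
  exists J : int, (J1 <= J)%R /\ (J <= J2)%R /\ a = c + J%:~R * delta.

Definition nearest (A : R -> Prop) (z a : R) : Prop :=
  A a /\ forall b, A b -> `|z - a| <= `|z - b|.

(* q is an r-th order Sigma-Delta quantization of y over alphabet A, with
   state vector u (u_i = 0 for i <= 0, indices shifted to 0-based):
   q_i = Q_A( sum_{j=1}^r (-1)^(j-1) C(r,j) u_{i-j} + y_i ), and
   (D^r u)_i = y_i - q_i. *)
Definition sigma_delta (A : R -> Prop) (r N : nat) (y q u : 'cV[R]_N) : Prop :=
  (forall i : 'I_N,
     nearest A
       (\sum_(1 <= j < r.+1 | (j <= i)%N)
          (-1) ^+ (j.-1) * ('C(r, j))%:R * u (insubd i (i - j)%N) 0 + y i 0)
       (q i 0))
  /\ (Dmx N) ^+ r *m u = y - q.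

End Defs.

From mathcomp Require Import all_boot all_order all_algebra.
From mathcomp Require Import reals.
From mathcomp Require Import ring lra.
Import Order.TTheory GRing.Theory Num.Theory.
Set Implicit Arguments. Unset Strict Implicit.
Local Open Scope ring_scope.

(* Put h = xhat - x and w = D^-r h.  Since x - q = D^r u, both x and xhat are
   feasible, so |w_i| <= delta and ||(D^beta)^T xhat||_1 <= ||(D^beta)^T x||_1.
   With g = (D^beta)^T h and S the support of (D^beta)^T x,
     ||h||_2^2 = <(D^r)^T h, w> <= delta ||(D^r)^T h||_1 <= delta 2^(r-beta) ||g||_1,
   and the cone constraint of l1 minimization gives
     ||g||_1 <= 2 ||g_S||_1 <= 2 sqrt(s) ||g||_2 <= 2^(beta+1) sqrt(s) ||h||_2,
   because ||D^T v||_p <= 2 ||v||_p for p = 1, 2.  Hence C = 2^(r+1) works. *)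

Lemma sqr_sum_le_card (R : realDomainType) (I : finType) (S : {pred I})
    (a : I -> R) :
  (\sum_(i in S) a i) ^+ 2 <= #|S|%:R * \sum_(i in S) a i ^+ 2.
Proof.
set A := \sum_(i in S) a i; set Q := \sum_(i in S) a i ^+ 2.
have pairs_ge0 : 0 <= \sum_(i in S) \sum_(j in S) (a i - a j) ^+ 2.
  by do 2!(apply: sumr_ge0 => ? _); exact: sqr_ge0.
have pairsE : \sum_(i in S) \sum_(j in S) (a i - a j) ^+ 2 = 2 * (#|S|%:R * Q - A ^+ 2).
  transitivity (\sum_(i in S) (#|S|%:R * a i ^+ 2 + Q - 2 * a i * A)).
    apply: eq_bigr => i _.
    rewrite /Q /A mulr_sumr mulr_natl -sumr_const -big_split -sumrB /=.
    by apply: eq_bigr => j _; ring.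
  rewrite !sumrB big_split /= -mulr_suml -!mulr_sumr sumr_const -mulr_natl.
  by rewrite -/Q -/A; ring.
lra.
Qed.

Lemma le_of_sqr_le_mul (R : realDomainType) (a c : R) :
  0 <= a -> 0 <= c -> a ^+ 2 <= c * a -> a <= c.
Proof. by move=> a_ge0 c_ge0; rewrite expr2; nra. Qed.

Section Norms.
Variable R : realType.

Lemma l2_ge0 N (v : 'cV[R]_N) : 0 <= l2 v.
Proof. exact: sqrtr_ge0. Qed.

Lemma sqr_l2 N (v : 'cV[R]_N) : l2 v ^+ 2 = \sum_(i < N) v i 0 ^+ 2.
Proof. by rewrite sqr_sqrtr // sumr_ge0 // => i _; apply: sqr_ge0. Qed.

Lemma sum_norm_le_l2 N (S : {set 'I_N}) (v : 'cV[R]_N) :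
  \sum_(i in S) `|v i 0| <= Num.sqrt #|S|%:R * l2 v.
Proof.
rewrite -ler_sqr ?nnegrE ?sumr_ge0 ?mulr_ge0 ?l2_ge0 ?sqrtr_ge0 //.
rewrite exprMn sqr_sqrtr // sqr_l2.
apply: le_trans (sqr_sum_le_card _ _) _; rewrite ler_wpM2l //.
rewrite (eq_bigr (fun i => v i 0 ^+ 2)) => [|i _]; last exact/real_normK/num_real.
by rewrite [X in _ <= X](bigID (mem S)) /= lerDl sumr_ge0 // => i _; apply: sqr_ge0.
Qed.

Lemma sqr_l2_mul_le N (M : 'M[R]_N) (w : 'cV[R]_N) (e : R) :
  (forall j, `|w j 0| <= e) -> l2 (M *m w) ^+ 2 <= e * l1 (M^T *m (M *m w)).
Proof.
move=> w_le; set h := M *m w.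
have -> : l2 h ^+ 2 = ((M^T *m h)^T *m w) 0 0.
  rewrite sqr_l2 trmx_mul trmxK -mulmxA mxE.
  by apply: eq_bigr => i _; rewrite [h^T _ _]mxE expr2.
rewrite mxE /l1 mulr_sumr; apply: ler_sum => j _; rewrite mxE.
by apply: le_trans (ler_norm _) _; rewrite normrM mulrC ler_wpM2r.
Qed.

Lemma l1_sub_le_sparse N (a b : 'cV[R]_N) :
  l1 b <= l1 a -> l1 (b - a) <= 2 * Num.sqrt (l0 a)%:R * l2 (b - a).
Proof.
move=> l1_ba; set S := [set i | a i 0 != 0]; set g := b - a.
have gE i : g i 0 = b i 0 - a i 0 by rewrite !mxE.
set GS := \sum_(i in S) `|g i 0|; set GN := \sum_(i | i \notin S) `|g i 0|.
have l1g : l1 g = GS + GN by rewrite /l1 (bigID (mem S)).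
have l1a : l1 a = \sum_(i in S) `|a i 0|.
  rewrite /l1 (bigID (mem S)) /= [X in _ + X]big1 ?addr0 // => i.
  by rewrite inE negbK => /eqP ->; rewrite normr0.
have l1b : \sum_(i in S) `|a i 0| - GS + GN <= l1 b.
  rewrite /l1 [X in _ <= X](bigID (mem S)) /= -sumrB.
  apply: lerD; apply: ler_sum => i.
    move=> _; have := ler_normB (b i 0) (b i 0 - a i 0).
    by rewrite gE opprB addrC subrK; lra.
  by rewrite inE negbK gE => /eqP ->; rewrite subr0.
apply: le_trans (_ : 2 * GS <= _).
  by rewrite l1g; lra.
by rewrite -mulrA ler_wpM2l // sum_norm_le_l2.
Qed.

Lemma trmx_exp_mul_le N (A : 'M[R]_N) (f : 'cV[R]_N -> R) (c : R) :
  0 <= c -> (forall v, f (A^T *m v) <= c * f v) ->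
  forall k v, f ((A ^+ k)^T *m v) <= c ^+ k * f v.
Proof.
move=> c_ge0 fA; elim=> [|k IHk] v.
  by rewrite expr0 mul1r [1]/(1%:M) trmx1 mul1mx.
rewrite exprSr -mulmxE trmx_mul -mulmxA exprS -mulrA.
by apply: le_trans (fA _) _; rewrite ler_wpM2l.
Qed.

End Norms.

Section DifferenceMatrix.
Variable R : realType.

Definition upshift N : 'M[R]_N := \matrix_(i < N, j < N) ((j : nat) == i.+1)%:R.

Lemma trDmx N : (Dmx R N)^T = 1%:M - upshift N.
Proof.
apply/matrixP => i j; rewrite !mxE eq_sym.
have [->|_] := eqVneq j i; first by rewrite ltn_eqF // subr0.
by case: (j == i.+1 :> nat); rewrite /= sub0r ?oppr0.
Qed.

Lemma trDmx_mul N (v : 'cV[R]_N) i :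
  ((Dmx R N)^T *m v) i 0 = v i 0 - (upshift N *m v) i 0.
Proof. by rewrite trDmx mulmxBl mul1mx !mxE. Qed.

Lemma sum_upshift_le N (F : R -> R) (v : 'cV[R]_N) :
  (forall x, 0 <= F x) -> F 0 = 0 ->
  \sum_(i < N) F ((upshift N *m v) i 0) <= \sum_(i < N) F (v i 0).
Proof.
move=> F_ge0 F0; case: N v => [|n] v; first by rewrite !big_ord0.
have upshiftE (i : 'I_n.+1) :
    (upshift n.+1 *m v) i 0 = \sum_(j < n.+1) ((j : nat) == i.+1)%:R * v j 0.
  by rewrite mxE; apply: eq_bigr => j _; rewrite mxE.
have upshift_max : (upshift n.+1 *m v) ord_max 0 = 0.
  by rewrite upshiftE big1 // => j _; rewrite ltn_eqF ?mul0r.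
have upshift_widen (i : 'I_n) :
    (upshift n.+1 *m v) (widen_ord (leqnSn n) i) 0 = v (lift ord0 i) 0.
  rewrite upshiftE (bigD1 (lift ord0 i)) //= eqxx mul1r big1 ?addr0 //.
  move=> j /eqP ne_j; case: eqP => [ej|_]; last by rewrite mul0r.
  by case: ne_j; apply: val_inj; rewrite /= ej.
rewrite big_ord_recr big_ord_recl /= upshift_max F0 addr0.
under eq_bigr do rewrite upshift_widen.
by rewrite -[X in X <= _]add0r lerD2r F_ge0.
Qed.

Lemma l1_trDmx N (v : 'cV[R]_N) : l1 ((Dmx R N)^T *m v) <= 2 * l1 v.
Proof.
rewrite /l1 mulr2n mulrDl mul1r.
apply: le_trans (_ : \sum_i (`|v i 0| + `|(upshift N *m v) i 0|) <= _).
  by apply: ler_sum => i _; rewrite trDmx_mul ler_normB.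
by rewrite big_split lerD2l sum_upshift_le ?normr0.
Qed.

Lemma l2_trDmx N (v : 'cV[R]_N) : l2 ((Dmx R N)^T *m v) <= 2 * l2 v.
Proof.
rewrite -ler_sqr ?nnegrE ?mulr_ge0 ?l2_ge0 // exprMn !sqr_l2.
apply: le_trans (_ : \sum_i (2 * v i 0 ^+ 2 + 2 * (upshift N *m v) i 0 ^+ 2) <= _).
  apply: ler_sum => i _; rewrite trDmx_mul.
  have := sqr_ge0 (v i 0 + (upshift N *m v) i 0); rewrite !expr2; nra.
rewrite big_split -!mulr_sumr /=.
have := sum_upshift_le v (F := fun x => x ^+ 2) (@sqr_ge0 _) (expr0n _ _).
have -> : (2 : R) ^+ 2 = 2 + 2 by rewrite expr2 mulr2n mulrDl mul1r.
lra.
Qed.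

Lemma l1_trDmxX N k (v : 'cV[R]_N) : l1 ((Dmx R N ^+ k)^T *m v) <= 2 ^+ k * l1 v.
Proof. by apply: trmx_exp_mul_le => //; apply: l1_trDmx. Qed.

Lemma l2_trDmxX N k (v : 'cV[R]_N) : l2 ((Dmx R N ^+ k)^T *m v) <= 2 ^+ k * l2 v.
Proof. by apply: trmx_exp_mul_le => //; apply: l2_trDmx. Qed.

Lemma unitmx_DmxX N k : Dmx R N ^+ k \in unitmx.
Proof.
have Dmx_unit : Dmx R N \in unitmx.
  rewrite unitmxE det_trig; last first.
    apply/is_trig_mxP => i j lt_ij.
    rewrite mxE; case: eqP => [ij|_]; first by move: lt_ij; rewrite ij ltnn.
    by rewrite ltn_eqF // ltnS ltnW.
  by rewrite big1 ?unitr1 // => i _; rewrite mxE eqxx.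
by elim: k => [|k IHk]; rewrite ?unitmx1 // exprSr -mulmxE unitmx_mul IHk.
Qed.

Lemma l1_minimizer_error N (k r : nat) (e : R) (x y : 'cV[R]_N) :
  (k <= r)%N -> 0 <= e ->
  (forall i, `|(invmx (Dmx R N ^+ r) *m (y - x)) i 0| <= e) ->
  l1 ((Dmx R N ^+ k)^T *m y) <= l1 ((Dmx R N ^+ k)^T *m x) ->
  l2 (y - x) <= 2 ^+ r.+1 * Num.sqrt (l0 ((Dmx R N ^+ k)^T *m x))%:R * e.
Proof.
move=> le_kr e_ge0 w_le l1_yx.
set P := (Dmx R N ^+ k)^T; set s := Num.sqrt _; set h := y - x.
have hE : h = Dmx R N ^+ r *m (invmx (Dmx R N ^+ r) *m h).
  by rewrite mulKVmx ?unitmx_DmxX.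
have DrE : (Dmx R N ^+ r)^T *m h = (Dmx R N ^+ (r - k))^T *m (P *m h).
  by rewrite mulmxA -trmx_mul mulmxE -exprD subnKC.
have PhE : P *m h = P *m y - P *m x by rewrite mulmxBr.
have l2h_sqr : l2 h ^+ 2 <= e * l1 ((Dmx R N ^+ r)^T *m h).
  by have := sqr_l2_mul_le (Dmx R N ^+ r) w_le; rewrite -hE.
have l1_Drh :
    l1 ((Dmx R N ^+ r)^T *m h) <= 2 ^+ (r - k) * (2 * s * (2 ^+ k * l2 h)).
  rewrite DrE; apply: le_trans (l1_trDmxX _ _) _; rewrite ler_wpM2l ?exprn_ge0 //.
  rewrite PhE; apply: le_trans (l1_sub_le_sparse l1_yx) _.
  by rewrite -PhE ler_wpM2l ?mulr_ge0 ?sqrtr_ge0 ?l2_trDmxX.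
apply: le_of_sqr_le_mul; first exact: l2_ge0.
  by rewrite !mulr_ge0 ?exprn_ge0 ?sqrtr_ge0.
apply: (le_trans l2h_sqr).
have -> : 2 ^+ r.+1 * s * e * l2 h = e * (2 ^+ (r - k) * (2 * s * (2 ^+ k * l2 h))).
  by rewrite -[in LHS](subnK le_kr) exprSr exprD; ring.
by rewrite ler_wpM2l.
Qed.

Lemma sigma_delta_state (A : R -> Prop) r N (y q u : 'cV[R]_N) :
  sigma_delta A r y q u -> invmx (Dmx R N ^+ r) *m (y - q) = u.
Proof. by case=> _ Dru; rewrite -Dru mulKmx ?unitmx_DmxX. Qed.

End DifferenceMatrix.

Theorem theorem1 (R : realType) (beta r : nat) :
  (beta == 1)%N || (beta == 2)%N -> (beta <= r)%N ->
  exists C : R, 0 < C /\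
  forall (N s : nat) (c delta : R) (J1 J2 : int)
         (x q u xhat : 'cV[R]_N),
    0 < delta ->
    (forall i, 0 <= x i 0 <= 1) ->
    (l0 ((Dmx R N ^+ beta)^T *m x) <= s)%N ->
    sigma_delta (alphabet c delta J1 J2) r x q u ->
    linf_le u (delta / 2) ->
    linf_le (invmx (Dmx R N ^+ r) *m (xhat - q)) (delta / 2) ->
    (forall z : 'cV[R]_N,
       linf_le (invmx (Dmx R N ^+ r) *m (z - q)) (delta / 2) ->
       l1 ((Dmx R N ^+ beta)^T *m xhat) <= l1 ((Dmx R N ^+ beta)^T *m z)) ->
    l2 (xhat - x) <= C * Num.sqrt (s%:R) * delta.
Proof.
move=> _ le_beta_r; exists (2 ^+ r.+1); split; first exact: exprn_gt0.
move=> N s c delta J1 J2 x q u xhat delta_gt0 _ sparse_x sd u_le xhat_feas xhat_min.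
have u_state := sigma_delta_state sd.
have x_feas : l1 ((Dmx R N ^+ beta)^T *m xhat) <= l1 ((Dmx R N ^+ beta)^T *m x).
  by apply: xhat_min; rewrite u_state.
have err_le i : `|(invmx (Dmx R N ^+ r) *m (xhat - x)) i 0| <= delta.
  have -> : xhat - x = (xhat - q) - (x - q) by rewrite opprB addrA subrK.
  rewrite mulmxBr u_state.
  apply: le_trans (_ : `|(invmx (Dmx R N ^+ r) *m (xhat - q)) i 0| + `|u i 0| <= _).
    by rewrite !mxE ler_normB.
  by have := xhat_feas i; have := u_le i; lra.
apply: le_trans (l1_minimizer_error le_beta_r (ltW delta_gt0) err_le x_feas) _.
apply: ler_wpM2r; first exact: ltW.
by rewrite ler_wpM2l ?exprn_ge0 // ler_sqrt ?ler_nat.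
Qed.
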